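(* Let $b\in\mathbb R^d$ and $\lambda_1\ge\lambda_2\ge\dots\ge\lambda_d>0$. Let $F(y)=-\sum_{i=1}^d|b_i|\sqrt{y_i}-\sqrt{\sum_{i=1}^d\lambda_i^{-1}y_i}$ and let $y^\star$ be an optimal solution of $\min_{y\in\Delta_{d-1}}F(y)$. Then $y^\star_i\ge B_i$ for all $i\in[d]$, where $B_i=b_i^2\,(\|b\|_2+\lambda_d^{-1/2})^{-2}$.
   Context: $\Delta_{d-1}=\{y\in\mathbb R^d:y_i\ge0,\sum_iy_i=1\}$. *)

From mathcomp Require Import all_boot all_order all_algebra.
From mathcomp Require Import reals.
Set Implicit Arguments. Unset Strict Implicit. Unset Printing Implicit Defensive.
Import Order.TTheory GRing.Theory Num.Theory.
Local Open Scope ring_scope.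

Definition simplex (R : realType) (d : nat) (y : 'I_d -> R) : Prop :=
  (forall i, 0 <= y i) /\ \sum_(i < d) y i = 1.

Definition Fobj (R : realType) (d : nat) (b lam : 'I_d -> R) (y : 'I_d -> R) : R :=
  - (\sum_(i < d) `|b i| * Num.sqrt (y i))
  - Num.sqrt (\sum_(i < d) (lam i)^-1 * y i).

Definition norm2 (R : realType) (d : nat) (b : 'I_d -> R) : R :=
  Num.sqrt (\sum_(i < d) b i ^+ 2).

From mathcomp Require Import all_boot all_order all_algebra.
From mathcomp Require Import reals.
From mathcomp Require Import ring lra.
Set Implicit Arguments. Unset Strict Implicit. Unset Printing Implicit Defensive.
Import Order.TTheory GRing.Theory Num.Theory.
Local Open Scope ring_scope.

(* Moving a mass [t = w^2] of [ystar] towards the vertex [e_i] multiplies every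
   coordinate term of [-F] by at least [sqrt (1 - t)], except the [i]-th one,
   which grows from [|b_i| sqrt y_i] to [|b_i| sqrt ((1 - t) y_i + t)].  As
   [w -> 0] the gain is [|b_i| w^2 / (2 sqrt y_i)] against a loss of
   [w^2 (-F(ystar)) / 2], so optimality forces [|b_i| <= sqrt y_i (-F(ystar))].
   Finally [-F(ystar) <= ||b||_2 + lambda_d^(-1/2)] by Cauchy-Schwarz and
   [lambda_j >= lambda_d]. *)

Lemma sum_mul_sqr_le (R : realDomainType) (d : nat) (a c : 'I_d -> R) :
  (\sum_j a j * c j) ^+ 2 <= (\sum_j a j ^+ 2) * (\sum_j c j ^+ 2).
Proof.
set A := \sum_j a j ^+ 2; set C := \sum_j c j ^+ 2; set S := \sum_j a j * c j.
have lagrange : \sum_j \sum_k (a j * c k - a k * c j) ^+ 2 = 2 * (A * C - S ^+ 2).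
  transitivity (\sum_j (a j ^+ 2 * C + A * c j ^+ 2 - 2 * (a j * c j) * S)).
    apply: eq_bigr => j _.
    rewrite (eq_bigr (fun k => a j ^+ 2 * c k ^+ 2 + c j ^+ 2 * a k ^+ 2
                               - 2 * (a j * c j) * (a k * c k))); last by move=> k _; ring.
    by rewrite big_split sumrN big_split /= -!mulr_sumr -/A -/C -/S (mulrC (c j ^+ 2)).
  rewrite sumrB big_split /= -!mulr_suml -!mulr_sumr -/A -/C -/S; ring.
have : 0 <= \sum_j \sum_k (a j * c k - a k * c j) ^+ 2.
  by apply: sumr_ge0 => j _; apply: sumr_ge0 => k _; exact: sqr_ge0.
by rewrite lagrange pmulr_rge0 // subr_ge0.
Qed.

Lemma sum_mul_le_sqrt (R : rcfType) (d : nat) (a c : 'I_d -> R) :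
  \sum_j a j * c j <= Num.sqrt (\sum_j a j ^+ 2) * Num.sqrt (\sum_j c j ^+ 2).
Proof.
rewrite -sqrtrM; last by apply: sumr_ge0 => j _; exact: sqr_ge0.
apply: le_trans (ler_norm _) _; rewrite -sqrtr_sqr.
exact/ler_wsqrtr/sum_mul_sqr_le.
Qed.

Lemma le0_of_le_small_mul (R : realFieldType) (x c : R) :
  (forall w, 0 < w <= 1 -> x <= w * c) -> x <= 0.
Proof.
move=> small; case: (lerP x 0) => // x0.
have [c0 | c0] := lerP c 0.
  by have := small 1; rewrite ltr01 lexx mul1r => /(_ isT); lra.
have xc0 : 0 < x + c by lra.
have := small (x / (x + c)).
rewrite divr_gt0 // ler_pdivrMr // mul1r lerDl ltW //= => /(_ isT).
rewrite mulrAC ler_pdivlMr //; nra.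
Qed.

Lemma mix_gain_le (R : rcfType) (be u K w : R) :
  0 <= be -> 0 <= u -> 0 <= K -> 0 < w <= 1 ->
  be * (Num.sqrt ((1 - w ^+ 2) * u ^+ 2 + w ^+ 2) - Num.sqrt (1 - w ^+ 2) * u)
    <= (1 - Num.sqrt (1 - w ^+ 2)) * K ->
  2 * (be - u * K) <= w * (K + be).
Proof.
move=> be0 u0 K0 /andP[w0 w1] gain.
set q := Num.sqrt (1 - w ^+ 2) in gain *.
set v := Num.sqrt ((1 - w ^+ 2) * u ^+ 2 + w ^+ 2) in gain *.
have w21 : w ^+ 2 <= 1 by rewrite expr_le1 // ltW.
have q0 : 0 <= q by exact: sqrtr_ge0.
have v0 : 0 <= v by exact: sqrtr_ge0.
have q2 : q ^+ 2 = 1 - w ^+ 2 by rewrite sqr_sqrtr // subr_ge0.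
have v2 : v ^+ 2 = (1 - w ^+ 2) * u ^+ 2 + w ^+ 2.
  by rewrite sqr_sqrtr // addr_ge0 ?sqr_ge0 ?mulr_ge0 ?sqr_ge0 ?subr_ge0.
(* [v - q u = w^2 / (v + q u)] and [1 - q = w^2 / (1 + q)]: clear both denominators. *)
have cleared : be * (1 + q) <= K * (v + q * u).
  have w2_gt0 : 0 < w ^+ 2 by exact: exprn_gt0.
  have : be * (v - q * u) * ((1 + q) * (v + q * u))
           <= (1 - q) * K * ((1 + q) * (v + q * u)).
    by apply: ler_wpM2r => //; rewrite mulr_ge0 ?addr_ge0 ?mulr_ge0.
  have -> : be * (v - q * u) * ((1 + q) * (v + q * u))
              = w ^+ 2 * (be * (1 + q)).
    transitivity (be * (1 + q) * (v ^+ 2 - q ^+ 2 * u ^+ 2)); first ring.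
    by rewrite v2 q2; ring.
  have -> : (1 - q) * K * ((1 + q) * (v + q * u)) = w ^+ 2 * (K * (v + q * u)).
    transitivity ((1 - q ^+ 2) * (K * (v + q * u))); first ring.
    by rewrite q2; ring.
  by rewrite ler_pM2l.
have q1 : q <= 1 by nra.
have q_ge : 1 - w ^+ 2 <= q by nra.
have v_le : v <= u + w by nra.
have Kv : K * (v + q * u) <= K * (2 * u + w) by apply: ler_wpM2l => //; nra.
have bq : be * (2 - w ^+ 2) <= be * (1 + q) by apply: ler_wpM2l => //; lra.
have bw : be * w ^+ 2 <= be * w by apply: ler_wpM2l => //; nra.
nra.
Qed.

Section SimplexPerturbation.

Variables (R : realType) (d : nat).
Implicit Types (b lam y : 'I_d -> R).

Definition mix_vertex y (i : 'I_d) (t : R) : 'I_d -> R :=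
  fun j => (1 - t) * y j + t * (j == i)%:R.

Lemma sum_delta (i : 'I_d) (t : R) : \sum_j t * (j == i)%:R = t.
Proof.
rewrite (bigD1 i) //= eqxx mulr1 big1 ?addr0 // => j /negbTE ->.
by rewrite mulr0.
Qed.

Lemma simplex_mix_vertex y i t :
  simplex y -> 0 <= t <= 1 -> simplex (mix_vertex y i t).
Proof.
case=> y0 y1 /andP[t0 t1]; split=> [j|].
  by rewrite addr_ge0 ?mulr_ge0 ?ler0n ?subr_ge0.
by rewrite big_split /= -mulr_sumr y1 sum_delta; ring.
Qed.

Lemma sum_abs_sqrt_le_norm2 b y :
  simplex y -> \sum_j `|b j| * Num.sqrt (y j) <= norm2 b.
Proof.
case=> y0 y1.
apply: le_trans (sum_mul_le_sqrt (fun j => `|b j|) (fun j => Num.sqrt (y j))) _.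
rewrite (eq_bigr _ (fun j _ => sqr_sqrtr (y0 j))) y1 sqrtr1 mulr1 /norm2.
by rewrite (eq_bigr _ (fun j _ => real_normK (num_real (b j)))).
Qed.

Lemma sqrt_sum_inv_le lam y m :
  0 < m -> (forall j, m <= lam j) -> simplex y ->
  Num.sqrt (\sum_j (lam j)^-1 * y j) <= (Num.sqrt m)^-1.
Proof.
move=> m0 lam_ge [y0 y1]; rewrite -sqrtrV ?(ltW m0) //; apply: ler_wsqrtr.
apply: le_trans (_ : \sum_j m^-1 * y j <= _); last by rewrite -mulr_sumr y1 mulr1.
apply: ler_sum => j _; apply: ler_wpM2r => //.
by rewrite lef_pV2 ?posrE // (lt_le_trans m0).
Qed.

Lemma oppFobj_ge0 b lam y : 0 <= - Fobj b lam y.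
Proof.
rewrite /Fobj opprD !opprK addr_ge0 ?sqrtr_ge0 //.
by apply: sumr_ge0 => j _; rewrite mulr_ge0 ?sqrtr_ge0.
Qed.

Lemma oppFobj_le b lam y m :
  0 < m -> (forall j, m <= lam j) -> simplex y ->
  - Fobj b lam y <= norm2 b + (Num.sqrt m)^-1.
Proof.
move=> m0 lam_ge hy; rewrite /Fobj opprD !opprK.
by rewrite lerD ?sum_abs_sqrt_le_norm2 ?sqrt_sum_inv_le.
Qed.

Lemma Fobj_mix_vertex_le b lam y i t :
  0 <= lam i -> 0 <= t <= 1 ->
  Fobj b lam (mix_vertex y i t)
    <= Num.sqrt (1 - t) * Fobj b lam y
       - `|b i| * (Num.sqrt ((1 - t) * y i + t) - Num.sqrt (1 - t) * Num.sqrt (y i)).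
Proof.
move=> lami0 /andP[t0 t1].
set q := Num.sqrt (1 - t); set gain := `|b i| * _.
have first_term : \sum_j `|b j| * Num.sqrt (mix_vertex y i t j)
                    = q * \sum_j `|b j| * Num.sqrt (y j) + gain.
  rewrite mulr_sumr (bigD1 i) //= [in RHS](bigD1 i) //= -addrA [_ + gain]addrC addrA.
  congr (_ + _); first by rewrite /mix_vertex eqxx mulr1 /gain; ring.
  apply: eq_bigr => j /negbTE ji.
  by rewrite /mix_vertex ji mulr0 addr0 sqrtrM ?subr_ge0 // -/q mulrCA.
have second_term : q * Num.sqrt (\sum_j (lam j)^-1 * y j)
                     <= Num.sqrt (\sum_j (lam j)^-1 * mix_vertex y i t j).
  rewrite -sqrtrM ?subr_ge0 //; apply: ler_wsqrtr.
  rewrite mulr_sumr (bigD1 i) //= [leRHS](bigD1 i) //= lerD //.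
    by rewrite /mix_vertex eqxx mulr1 mulrDr mulrCA lerDl mulr_ge0 ?invr_ge0.
  apply: ler_sum => j /negbTE ji.
  by rewrite /mix_vertex ji mulr0 addr0 mulrCA.
rewrite /Fobj first_term; lra.
Qed.

Lemma opt_abs_le_sqrt_mul b lam y i :
  0 <= lam i -> simplex y -> (forall y', simplex y' -> Fobj b lam y <= Fobj b lam y') ->
  `|b i| <= Num.sqrt (y i) * - Fobj b lam y.
Proof.
move=> lami0 hy opt.
suff : 2 * (`|b i| - Num.sqrt (y i) * - Fobj b lam y) <= 0 by lra.
apply: (le0_of_le_small_mul (c := - Fobj b lam y + `|b i|)) => w /andP[w0 w1].
have t01 : 0 <= w ^+ 2 <= 1 by rewrite sqr_ge0 expr_le1 // ltW.
have gain := le_trans (opt _ (simplex_mix_vertex i hy t01))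
                      (Fobj_mix_vertex_le b y lami0 t01).
apply: mix_gain_le; rewrite ?normr_ge0 ?oppFobj_ge0 ?sqrtr_ge0 ?w0 ?w1 //.
rewrite sqr_sqrtr; [lra | exact: hy.1].
Qed.

End SimplexPerturbation.

Theorem lemma1 (R : realType) (n : nat) (b lam : 'I_n.+1 -> R)
  (hlam_sorted : forall i j : 'I_n.+1, (i <= j)%N -> lam j <= lam i)
  (hlam_pos : 0 < lam ord_max)
  (ystar : 'I_n.+1 -> R)
  (hy_feas : simplex ystar)
  (hy_opt : forall y : 'I_n.+1 -> R, simplex y -> Fobj b lam ystar <= Fobj b lam y) :
  forall i : 'I_n.+1,
    b i ^+ 2 / (norm2 b + (Num.sqrt (lam ord_max))^-1) ^+ 2 <= ystar i.
Proof.
move=> i.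
have lam_ge j : lam ord_max <= lam j := hlam_sorted j ord_max (leq_ord j).
have lami0 : 0 <= lam i := ltW (lt_le_trans hlam_pos (lam_ge i)).
set M := norm2 b + _.
have M0 : 0 < M by rewrite ltr_wpDl ?sqrtr_ge0 // invr_gt0 sqrtr_gt0.
have bi_le : `|b i| <= Num.sqrt (ystar i) * M.
  apply: le_trans (opt_abs_le_sqrt_mul lami0 hy_feas hy_opt) _.
  by rewrite ler_wpM2l ?sqrtr_ge0 ?oppFobj_le.
rewrite ler_pdivrMr ?exprn_gt0 // -real_normK ?num_real //.
rewrite -(sqr_sqrtr (hy_feas.1 i)) -exprMn ler_sqr ?nnegrE ?normr_ge0 //.
by rewrite mulr_ge0 ?sqrtr_ge0 ?ltW.
Qed.
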